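(* The collection $\mathrm{Cov}(\mathrm{St}\mathbb{C}^n)$ of covering families makes the category $\mathrm{St}\mathbb{C}^n$ into a Verdier site.
   Context: $\mathrm{St}\mathbb{C}^n$ is the category whose objects are $n$-dimensional Stein manifolds that are biholomorphic to an open subset of $\mathbb{C}^n$ (the empty manifold is included as an initial object, so that ''empty pullbacks'' exist), and whose morphisms are holomorphic embeddings, i.e. holomorphic maps that are biholomorphisms onto their (open) image. A family $\{U_i \xrightarrow{f_i} U\}_{i\in I}$ of morphisms of $\mathrm{St}\mathbb{C}^n$ is a covering family if $\bigcup_{i\in I} f_i(U_i) = U$; $\mathrm{Cov}(\mathrm{St}\mathbb{C}^n)$ denotes the collection of all covering families. A site is a category $\mathscr{C}$ with a collection $\mathrm{Cov}(\mathscr{C})$ of families $\{U_i\to U\}_{i\in I}$ of morphisms such that: (i) for every isomorphism $f:U'\to U$, $\{f\}$ is in $\mathrm{Cov}(\mathscr{C})$; (ii) if $\{U_i\to U\}_{i\in I}\in\mathrm{Cov}(\mathscr{C})$ and for each $i$, $\{V_{i,j}\to U_i\}_{j\in J_i}\in \mathrm{Cov}(\mathscr{C})$, then $\{V_{i,j}\to U_i\to U\}_{i,j}\in\mathrm{Cov}(\mathscr{C})$; (iii) if $\{U_i\to U\}_{i\in I}\in\mathrm{Cov}(\mathscr{C})$ and $V\to U$ is any morphism, then the fibre products $U_i\times_U V$ exist in $\mathscr{C}$ and $\{U_i\times_U V\to V\}_{i\in I}\in\mathrm{Cov}(\mathscr{C})$. A morphism is basal if it belongs to some covering family; a Verdier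 site is a site such that additionally (iv) for every basal morphism $V\to U$, the diagonal $V\to V\times_U V$ is basal. *)

From HB Require Import structures.
From mathcomp Require Import all_boot all_order all_algebra.
From mathcomp Require Import complex.
From mathcomp Require Import all_classical all_reals all_analysis.
Import numFieldNormedType.Exports.
Set Implicit Arguments. Unset Strict Implicit. Unset Printing Implicit Defensive.
Import Order.TTheory GRing.Theory Num.Theory.
Local Open Scope ring_scope.
Local Open Scope classical_set_scope.

Section StCn.
Variables (R : realType) (n : nat).

Definition Cn : normedModType R[i] := 'rV[R[i]]_n.

(* holomorphic on A: complex (R[i]-linear) Frechet differentiable at every point of A *)
Definition holo_on (W : normedModType R[i]) (A : set Cn) (f : Cn -> W) : Prop :=
  forall x, A x -> differentiable f x.

Definition hol_hull (U K : set Cn) : set Cn :=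
  [set z | U z /\ forall f : Cn -> R[i]^o, holo_on U f ->
     forall c : R[i], (forall w, K w -> `|f w| <= c) -> `|f z| <= c].

(* Stein open subset of C^n: holomorphically convex and holomorphically separable
   (local coordinates being given by the coordinate functions) *)
Definition stein (U : set Cn) : Prop :=
  (forall K, compact K -> K `<=` U -> compact (hol_hull U K)) /\
  (forall x y, U x -> U y -> x <> y ->
     exists f : Cn -> R[i]^o, holo_on U f /\ f x <> f y).

(* objects of St C^n (up to the equivalence of categories: Stein open subsets of C^n,
   the empty set included) *)
Definition obj (U : set Cn) : Prop := open U /\ stein U.

Definition mor (U V : set Cn) (f : Cn -> Cn) : Prop :=
  [/\ obj U, obj V, holo_on U f, f @` U `<=` V &
     [/\ {in U &, injective f}, open (f @` U) &
         exists g : Cn -> Cn, holo_on (f @` U) g /\ (forall x, U x -> g (f x) = x)]].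

Definition meq (U : set Cn) (f g : Cn -> Cn) : Prop := forall x, U x -> f x = g x.

Definition is_iso (U' U : set Cn) (f : Cn -> Cn) : Prop :=
  mor U' U f /\ exists g, [/\ mor U U' g, meq U' (g \o f) id & meq U (f \o g) id].

Definition covering (I : Type) (Ui : I -> set Cn) (fi : I -> Cn -> Cn) (U : set Cn) : Prop :=
  [/\ obj U, (forall i, mor (Ui i) U (fi i)) & \bigcup_i (fi i @` Ui i) = U].

Definition pullback (A B C : set Cn) (f1 f2 : Cn -> Cn)
    (P : set Cn) (p1 p2 : Cn -> Cn) : Prop :=
  [/\ mor P A p1, mor P B p2, meq P (f1 \o p1) (f2 \o p2) &
    forall Q q1 q2, mor Q A q1 -> mor Q B q2 -> meq Q (f1 \o q1) (f2 \o q2) ->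
      exists h, [/\ mor Q P h, meq Q (p1 \o h) q1, meq Q (p2 \o h) q2 &
        forall h', mor Q P h' -> meq Q (p1 \o h') q1 -> meq Q (p2 \o h') q2 ->
          meq Q h h']].

Definition basal (V U : set Cn) (f : Cn -> Cn) : Prop :=
  exists (I : Type) (Ui : I -> set Cn) (fi : I -> Cn -> Cn),
    covering Ui fi U /\ exists i, Ui i = V /\ meq V (fi i) f.

Definition site_ax1 : Prop :=
  forall U' U f, is_iso U' U f -> covering (fun _ : unit => U') (fun _ => f) U.

Definition site_ax2 : Prop :=
  forall (I : Type) Ui fi U, covering Ui fi U ->
  forall (J : I -> Type) (V : forall i, J i -> set Cn) (g : forall i, J i -> Cn -> Cn),
    (forall i, covering (V i) (g i) (Ui i)) ->
    covering (fun k : {i : I & J i} => V (projT1 k) (projT2 k))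
             (fun k => fi (projT1 k) \o g (projT1 k) (projT2 k)) U.

Definition site_ax3 : Prop :=
  forall (I : Type) Ui fi U V v, covering Ui fi U -> mor V U v ->
    (forall i : I, exists P p1 p2, pullback (Ui i) V U (fi i) v P p1 p2) /\
    (forall (P : I -> set Cn) (p1 p2 : I -> Cn -> Cn),
       (forall i, pullback (Ui i) V U (fi i) v (P i) (p1 i) (p2 i)) ->
       covering P p2 V).

Definition verdier_ax4 : Prop :=
  forall V U f, basal V U f ->
  forall P p1 p2, pullback V V U f f P p1 p2 ->
  forall d, mor V P d -> meq V (p1 \o d) id -> meq V (p2 \o d) id -> basal V P d.

Definition verdier_site_StCn : Prop :=
  [/\ site_ax1, site_ax2, site_ax3 & verdier_ax4].

End StCn.

From HB Require Import structures.
From mathcomp Require Import all_boot all_order all_algebra.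
From mathcomp Require Import complex.
From mathcomp Require Import all_classical all_reals all_analysis.
Import numFieldNormedType.Exports.
Set Implicit Arguments. Unset Strict Implicit. Unset Printing Implicit Defensive.
Import Order.TTheory GRing.Theory Num.Theory.
Local Open Scope ring_scope.
Local Open Scope classical_set_scope.

(** Morphisms are injective, so a morphism admitting a one-sided inverse
    morphism is onto; hence isomorphisms and diagonals form one-element
    coverings. The fibre product of [f : A -> D] and [v : B -> D] is the open
    set [B ∩ v^-1(f(A))], with the inclusion into [B] and [f^-1 ∘ v] into [A];
    it is Stein because [v] identifies it with [v(B) ∩ f(A)], and holomorphic
    convexity and separation pass to intersections and to holomorphic
    retracts. Every fibre product has that same image in [B], so coverings
    are stable under base change. *)

Lemma image_section_inj (T U : Type) (V : set T) (P : set U)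
    (p : U -> T) (d : T -> U) :
  {in P &, injective p} -> p @` P `<=` V -> d @` V `<=` P ->
  (forall x, V x -> p (d x) = x) -> d @` V = P.
Proof.
move=> pinj pPV dVP pdK; apply/seteqP; split => // z Pz.
have Vpz : V (p z) by apply: pPV; exact: imageP.
have Pdpz : P (d (p z)) by apply: dVP; exact: imageP.
by exists (p z) => //; apply: pinj; rewrite ?inE ?pdK.
Qed.

Section StCn_site.
Variables (R : realType) (n : nat).
Local Notation C := (Cn R n).

Lemma holo_onS (W : normedModType R[i]) (A B : set C) (f : C -> W) :
  A `<=` B -> holo_on B f -> holo_on A f.
Proof. by move=> AB hf x /AB; exact: hf. Qed.

Lemma holo_on_comp (W : normedModType R[i]) (A B : set C) (g : C -> C)
    (f : C -> W) :
  holo_on A g -> holo_on B f -> g @` A `<=` B -> holo_on A (f \o g).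
Proof.
move=> hg hf /image_subP gAB x Ax.
by apply: differentiable_comp; [exact: hg | exact/hf/gAB].
Qed.

Lemma holo_on_continuous (W : normedModType R[i]) (A : set C) (f : C -> W) :
  holo_on A f -> {in A, continuous f}.
Proof. by move=> hf x /set_mem /hf /differentiable_continuous. Qed.

Lemma compact_holo_image (A K : set C) (f : C -> C) :
  holo_on A f -> compact K -> K `<=` A -> compact (f @` K).
Proof.
move=> hf cK KA; apply: continuous_compact cK; apply: continuous_in_subspaceT.
exact/holo_on_continuous/(holo_onS KA).
Qed.

Lemma hol_hull_sub (A K : set C) : hol_hull A K `<=` A.
Proof. by move=> z []. Qed.

Lemma hol_hullS (A B K : set C) : B `<=` A -> hol_hull B K `<=` hol_hull A K.
Proof.
move=> BA z [Bz Hz]; split=> [|f hf]; first exact: BA.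
by apply: Hz; exact: holo_onS hf.
Qed.

Lemma closure_hol_hull (A K : set C) :
  closure (hol_hull A K) `&` A `<=` hol_hull A K.
Proof.
move=> z [clz Az]; split => // f hf c fKc.
have fHc w : hol_hull A K w -> `|f w| <= c by case=> _; exact.
have [w0 [Hw0 _]] := clz setT filterT.
have c_real : c \is Num.real by apply: ger0_real (le_trans _ (fHc _ Hw0)).
rewrite real_leNgt ?normr_real //; apply/negP => cltfz.
have /cvgrPdist_lt /(_ (`|f z| - c)) := differentiable_continuous (hf z Az).
rewrite subr_gt0 => /(_ cltfz) /clz [w [Hw fzw]].
have := le_lt_trans (lerB_dist (f z) (f w)) fzw.
by rewrite ltrD2l ltrN2 => /(le_lt_trans (fHc _ Hw)); rewrite ltxx.
Qed.

Lemma compact_hol_hull (A K D : set C) :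
  compact D -> D `<=` A -> hol_hull A K `<=` D -> compact (hol_hull A K).
Proof.
move=> cD DA HD; apply: (subclosed_compact _ cD HD) => z clz.
have Dz : D z.
  by apply: (compact_closed (@norm_hausdorff _ _) cD); exact: closureS clz.
by apply: closure_hol_hull; split => //; exact: DA.
Qed.

Lemma hol_hull_image (A B K : set C) (phi : C -> C) :
  holo_on A phi -> phi @` A `<=` B ->
  phi @` hol_hull A K `<=` hol_hull B (phi @` K).
Proof.
move=> hphi phiAB _ [z [Az Hz] <-]; split; first by apply: phiAB; exact: imageP.
move=> f hf c fKc; apply: (Hz (f \o phi)); first exact: holo_on_comp hf phiAB.
by move=> w Kw; apply: fKc; exact: imageP.
Qed.

Lemma stein_retract (A B : set C) (phi psi : C -> C) :
  holo_on A phi -> holo_on B psi -> phi @` A `<=` B -> psi @` B `<=` A ->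
  (forall x, A x -> psi (phi x) = x) -> stein B -> stein A.
Proof.
move=> hphi hpsi phiAB psiBA psiK [convB sepB]; split.
- move=> K cK KA.
  have phiKB : phi @` K `<=` B by apply: subset_trans phiAB; exact: image_subset.
  have cH := convB _ (compact_holo_image hphi cK KA) phiKB.
  apply: (@compact_hol_hull _ _ (psi @` hol_hull B (phi @` K))).
  + exact: compact_holo_image hpsi cH (@hol_hull_sub _ _).
  + by apply: subset_trans psiBA; apply: image_subset; exact: hol_hull_sub.
  + move=> z Hz; exists (phi z); first exact: (hol_hull_image hphi phiAB) (imageP _ Hz).
    by apply: psiK; exact: hol_hull_sub Hz.
- move=> x y Ax Ay xy.
  have phixy : phi x <> phi y.
    by move=> e; apply: xy; rewrite -(psiK x Ax) -(psiK y Ay) e.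
  have [f [hf fxy]] :=
    sepB _ _ (phiAB _ (imageP _ Ax)) (phiAB _ (imageP _ Ay)) phixy.
  by exists (f \o phi); split => //; exact: holo_on_comp hf phiAB.
Qed.

Lemma steinI (U V : set C) : stein U -> stein V -> stein (U `&` V).
Proof.
move=> [convU sepU] [convV sepV]; split.
- move=> K cK; rewrite subsetI => -[KU KV].
  have cHU := convU K cK KU; have cHV := convV K cK KV.
  apply: (@compact_hol_hull _ _ (hol_hull U K `&` hol_hull V K)).
  + apply: (subclosed_compact _ cHU (@subIsetl _ _ _)).
    by apply: closedI; apply: compact_closed => //; exact: norm_hausdorff.
  + by move=> z [[Uz _] [Vz _]].
  + by move=> z Hz; split; apply: hol_hullS Hz; [exact: subIsetl | exact: subIsetr].
- move=> x y [Ux _] [Uy _] xy; have [f [hf fxy]] := sepU x y Ux Uy xy.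
  by exists f; split => //; exact: holo_onS hf.
Qed.

Lemma mor_dom_obj (A B : set C) f : mor A B f -> obj A.
Proof. by case. Qed.

Lemma mor_cod_obj (A B : set C) f : mor A B f -> obj B.
Proof. by case. Qed.

Lemma mor_image_sub (A B : set C) f : mor A B f -> f @` A `<=` B.
Proof. by case. Qed.

Lemma holo_inverse_mor (A B : set C) f : mor A B f ->
  exists g, [/\ holo_on (f @` A) g, (forall x, A x -> g (f x) = x),
    g @` (f @` A) = A & (forall y, (f @` A) y -> f (g y) = y)].
Proof.
move=> [_ _ _ _ [_ _ [g [hg gK]]]]; exists g; split => //.
- apply/seteqP; split => [_ [_ [x Ax <-] <-]|x Ax]; first by rewrite gK.
  by exists (f x); [exact: imageP | exact: gK].
- by move=> _ [x Ax <-]; rewrite gK.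
Qed.

Lemma obj_mor_image (A B : set C) f : mor A B f -> obj (f @` A).
Proof.
move=> m; have [[_ steinA] _ hf _ [_ ofA _]] := m.
have [g [hg gK gfA fK]] := holo_inverse_mor m.
split => //; apply: (stein_retract hg hf _ _ fK steinA) => //.
by rewrite gfA.
Qed.

Lemma mor_inverse (A B : set C) f : mor A B f ->
  exists g, [/\ mor (f @` A) A g, (forall x, A x -> g (f x) = x)
    & (forall y, (f @` A) y -> f (g y) = y)].
Proof.
move=> m; have [oA _ hf _ _] := m.
have [g [hg gK gfA fK]] := holo_inverse_mor m.
exists g; split => //; split; rewrite ?gfA //; first exact: obj_mor_image m.
split; [|exact: oA.1|by exists f].
move=> y1 y2 /set_mem fAy1 /set_mem fAy2 gy12.
by rewrite -(fK _ fAy1) -(fK _ fAy2) gy12.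
Qed.

Lemma mor_id (A : set C) : obj A -> mor A A id.
Proof.
move=> oA; split; rewrite ?image_id //.
split; [by move=> x y _ _ | exact: oA.1 | by exists id; split => // ? ?].
Qed.

Lemma mor_restr (A A' B : set C) f :
  mor A B f -> obj A' -> A' `<=` A -> mor A' B f.
Proof.
move=> m oA' A'A; have [_ oB hf fAB [finj _ _]] := m.
have [g [hg gK _ fK]] := holo_inverse_mor m.
have fA'E : f @` A' = f @` A `&` g @^-1` A'.
  apply/seteqP; split=> [_ [x A'x <-]|y [fAy A'gy]]; last by exists (g y); rewrite ?fK.
  by split; [apply: imageP; exact: A'A | rewrite /= gK //; exact: A'A].
split => //; first exact: holo_onS hf.
  exact: subset_trans (image_subset _ A'A) fAB.
split.
- by move=> x y /set_mem/A'A/mem_set xA /set_mem/A'A/mem_set; exact: finj.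
- rewrite fA'E; apply: (continuous_inP _ (obj_mor_image m).1).1 oA'.1.
  exact: holo_on_continuous hg.
- exists g; split; last by move=> x /A'A; exact: gK.
  by apply: holo_onS hg; rewrite fA'E; exact: subIsetl.
Qed.

Lemma mor_corestr (A B B' : set C) f :
  mor A B f -> obj B' -> f @` A `<=` B' -> mor A B' f.
Proof. by case=> oA _ hf _ fiso oB' fAB'; split. Qed.

Lemma mor_comp (A B D : set C) g f :
  mor A B g -> mor B D f -> mor A D (f \o g).
Proof.
move=> mg mf; have [oA _ hg gAB [ginj _ _]] := mg.
have [_ oD hf fBD [finj _ _]] := mf.
have [_ _ _ _ [_ ofgA _]] := mor_restr mf (obj_mor_image mg) gAB.
have [g' [hg' g'K _ _]] := holo_inverse_mor mg.
have [f' [hf' f'K _ _]] := holo_inverse_mor mf.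
have gA_B x : A x -> B (g x) by move=> Ax; apply: gAB; exact: imageP.
have fgAE : (f \o g) @` A = f @` (g @` A) by rewrite image_comp.
split; rewrite ?fgAE //.
- exact: holo_on_comp hg hf gAB.
- exact: subset_trans (image_subset f gAB) fBD.
split => //.
- move=> x y /set_mem Ax /set_mem Ay /= e.
  by apply: ginj; rewrite ?inE //; apply: finj; rewrite ?inE //; exact: gA_B.
- exists (g' \o f'); split.
  + apply: (@holo_on_comp _ _ (g @` A)) hg' _.
      by apply: holo_onS hf'; exact: image_subset.
    by move=> _ [_ [z gAz <-] <-]; rewrite /= f'K //; exact: gAB.
  + by move=> x Ax /=; rewrite f'K ?g'K //; exact: gA_B.
Qed.

Section Pullback.
Variables (A B D : set C) (f v : C -> C).
Hypotheses (mf : mor A D f) (mv : mor B D v).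

Lemma obj_fibre : obj (B `&` v @^-1` (f @` A)).
Proof.
have [[oB _] _ hv _ _] := mv.
have [v' [mv' v'K vK]] := mor_inverse mv.
have [_ _ hv' v'vB _] := mv'.
split.
  exact: (continuous_inP _ oB).1 (holo_on_continuous hv) _ (obj_mor_image mf).1.
apply: (@stein_retract _ (v @` B `&` f @` A) v v').
- exact: holo_onS hv.
- by apply: holo_onS hv'; exact: subIsetl.
- by move=> _ [x [Bx fAvx] <-]; split => //; exact: imageP.
- by move=> _ [y [vBy fAy] <-]; split; [apply: v'vB; exact: imageP | rewrite /= vK].
- by move=> x [Bx _]; exact: v'K.
- exact: steinI (obj_mor_image mv).2 (obj_mor_image mf).2.
Qed.

Lemma pullback_fibre : exists p1, pullback A B D f v (B `&` v @^-1` (f @` A)) p1 id.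
Proof.
have [f' [mf' f'K fK]] := mor_inverse mf.
have PB : B `&` v @^-1` (f @` A) `<=` B := @subIsetl _ _ _.
have mvfA : mor (B `&` v @^-1` (f @` A)) (f @` A) v.
  apply: mor_corestr (mor_restr mv obj_fibre PB) (obj_mor_image mf) _.
  by move=> _ [x [_ fAvx] <-].
exists (f' \o v); split.
- exact: mor_comp mvfA mf'.
- exact: mor_restr (mor_id (mor_dom_obj mv)) obj_fibre PB.
- by move=> x [_ fAvx] /=; rewrite fK.
- move=> Q q1 q2 mq1 mq2 fq1vq2.
  have fAq1 x : Q x -> (f @` A) (f (q1 x)).
    by move=> Qx; apply: imageP; apply: (mor_image_sub mq1); exact: imageP.
  have mq2P : mor Q (B `&` v @^-1` (f @` A)) q2.
    apply: (mor_corestr mq2 obj_fibre) => _ [x Qx <-].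
    split; first by apply: (mor_image_sub mq2); exact: imageP.
    by have /= <- := fq1vq2 x Qx; exact: fAq1.
  exists q2; split => //.
  + move=> x Qx /=; have /= <- := fq1vq2 x Qx.
    by rewrite f'K //; apply: (mor_image_sub mq1); exact: imageP.
  + by move=> h' _ _ h'q2 x Qx; rewrite -h'q2.
Qed.

Lemma pullback_image P p1 p2 :
  pullback A B D f v P p1 p2 -> p2 @` P = B `&` v @^-1` (f @` A).
Proof.
move=> [mp1 mp2 fp1vp2 univ]; apply/seteqP; split.
- move=> _ [z Pz <-]; split; first by apply: (mor_image_sub mp2); exact: imageP.
  have /= <- := fp1vp2 z Pz; apply: imageP.
  by apply: (mor_image_sub mp1); exact: imageP.
- move=> x Px; have [q1 [mq1 mq2 fq1vq2 _]] := pullback_fibre.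
  have [h [mh _ p2h _]] := univ _ _ _ mq1 mq2 fq1vq2.
  by exists (h x); [apply: (mor_image_sub mh); exact: imageP | exact: p2h].
Qed.

End Pullback.

Lemma covering_onto (V U : set C) f :
  mor V U f -> f @` V = U -> covering (fun _ : unit => V) (fun _ => f) U.
Proof.
move=> m fVU; split => //; first exact: mor_cod_obj m.
by rewrite bigcup_const //; exists tt.
Qed.

Lemma site_ax1_StCn : site_ax1 R n.
Proof.
move=> U' U f [mf [g [mg _ fgK]]]; apply: (covering_onto mf).
apply/seteqP; split; first exact: mor_image_sub mf.
by move=> y Uy; exists (g y); [apply: (mor_image_sub mg); exact: imageP | exact: fgK].
Qed.

Lemma site_ax2_StCn : site_ax2 R n.
Proof.
move=> I Ui fi U [oU mfi covU] J V g covUi; split => //.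
  by move=> [i j]; apply: mor_comp (mfi i); case: (covUi i).
rewrite -covU; apply/seteqP; split.
- move=> _ [[i j] _ [x Vx <-]]; exists i => //; apply: imageP.
  have [_ mgi _] := covUi i; apply: (mor_image_sub (mgi j)); exact: imageP.
- move=> _ [i _ [u Uiu <-]]; have [_ _ covi] := covUi i.
  move: Uiu; rewrite -covi => -[j _ [w Vw <-]].
  by exists (existT _ i j) => //; exists w.
Qed.

Lemma site_ax3_StCn : site_ax3 R n.
Proof.
move=> I Ui fi U V v [_ mfi covU] mv; split.
  move=> i; have [p1 pb] := pullback_fibre (mfi i) mv.
  by exists (V `&` v @^-1` (fi i @` Ui i)), p1, id.
move=> P p1 p2 pb; split; [exact: mor_dom_obj mv | by move=> i; case: (pb i) |].
rewrite (eq_bigcupr (fun i _ => pullback_image (mfi i) mv (pb i))).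
rewrite -setI_bigcupr -preimage_bigcup covU; apply: setIidl.
by move=> x Vx; apply: (mor_image_sub mv); exact: imageP.
Qed.

Lemma verdier_ax4_StCn : verdier_ax4 R n.
Proof.
move=> V U f _ P p1 p2 [mp1 _ _ _] d md p1dK _.
exists unit, (fun _ => V), (fun _ => d); split; last by exists tt.
apply: (covering_onto md).
have [_ _ _ p1PV [p1inj _ _]] := mp1.
exact: image_section_inj p1inj p1PV (mor_image_sub md) p1dK.
Qed.

End StCn_site.

Theorem lemma1p3 (R : realType) (n : nat) : verdier_site_StCn R n.
Proof.
split; [exact: site_ax1_StCn | exact: site_ax2_StCn | exact: site_ax3_StCn
       | exact: verdier_ax4_StCn].
Qed.
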